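(* Let $n\ge2$, let $a,b\in H_n\rtimes S_n$ satisfy $\sigma_a=\sigma_b$, and let $x\in H_n$ with $x^{-1}ax=b$. Let $[k]_a$ be a class of size $q$, let $i_1\in[k]_a$ and $i_s=i_1\sigma_a^{s-1}$ for $1\le s\le q$. Then for all $1\le s\le q$, $$t_{i_s}(x)=t_{i_1}(x)+\sum_{d=1}^{s-1}\big(t_{i_d}(\omega_b)-t_{i_d}(\omega_a)\big).$$ In particular the values $t_i(x)$, $i\in[k]_a$, are determined by $t_{i_1}(x)$ and the numbers $t_i(a),t_i(b)$, $i\in[k]_a$.
   Context: $\mathbb{N}=\{1,2,\dots\}$, $X_n=\{1,\dots,n\}\times\mathbb{N}$, permutations act on the right. $H_n$ is the group of bijections $g$ of $X_n$ with $z_i(g)\in\mathbb{N}$, $t_i(g)\in\mathbb{Z}$ such that $(i,m)g=(i,m+t_i(g))$ for all $m\ge z_i(g)$. $S_n$ acts by $(i,m)\sigma=(i\sigma,m)$, and $H_n\rtimes S_n\le\mathrm{Sym}(X_n)$ is generated by $H_n$ and these; each $g\in H_n\rtimes S_n$ is uniquely $g=\omega_g\sigma_g$ with $\omega_g\in H_n$, $\sigma_g\in S_n$, and $t_i(g):=t_i(\omega_g)$. The class $[i]_g$ is the orbit of $i$ under $\langle\sigma_g\rangle$. *)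

From mathcomp Require Import all_boot all_order all_algebra all_fingroup.
Set Implicit Arguments. Unset Strict Implicit. Unset Printing Implicit Defensive.
Import GRing.Theory Num.Theory.

(* Row i in {1..n} is represented by i : 'I_n (shift by 1),
   the column m in N = {1,2,...} is represented by m.-1 : nat (shift by 1).
   Permutations of X_n are plain functions X_n -> X_n; since permutations act
   on the right, the product g h (first g, then h) is the function h \o g. *)
Definition Xn (n : nat) := ('I_n * nat)%type.

Definition is_trans n (g : Xn n -> Xn n) (i : 'I_n) (t : int) : Prop :=
  exists z : nat, forall m : nat, (z <= m)%N ->
    (g (i, m)).1 = i /\ Posz (g (i, m)).2 = (Posz m + t)%R.

Definition in_H n (g : Xn n -> Xn n) : Prop :=
  bijective g /\ forall i : 'I_n, exists t : int, is_trans g i t.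

Definition sact n (s : 'S_n) (p : Xn n) : Xn n := (s p.1, p.2).

From mathcomp Require Import all_boot all_order all_algebra all_fingroup.
From mathcomp Require Import zify.
Import GRing.Theory Num.Theory.

Set Implicit Arguments.
Unset Strict Implicit.
Unset Printing Implicit Defensive.

(* Evaluate the identity (i,m) a x = (i,m) x b far out along row i.  On the
   left, row i is moved by t_i(a) and sent to row i sigma, where x adds
   t_{i sigma}(x); on the right, x adds t_i(x), then omega_b adds t_i(b).
   Comparing the eventual translation lengths gives
   t_{i sigma}(x) = t_i(x) + t_i(b) - t_i(a), and iterating this relation
   along the sigma-orbit of i_1 gives the formula. *)

Definition row_shift n (g : Xn n -> Xn n) (i j : 'I_n) (t : int) : Prop :=
  exists z : nat, forall m : nat, (z <= m)%N ->
    (g (i, m)).1 = j /\ Posz (g (i, m)).2 = (Posz m + t)%R.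

Section RowShift.

Variable n : nat.
Implicit Types (f g h : Xn n -> Xn n) (i j k : 'I_n) (t u : int).

Lemma row_shift_ext f g i j t :
  (forall p, f p = g p) -> row_shift f i j t -> row_shift g i j t.
Proof. by move=> fg [z Hz]; exists z => m /Hz; rewrite fg. Qed.

Lemma row_shift_sact (s : 'S_n) i : row_shift (sact s) i (s i) 0.
Proof. by exists 0%N => m _; rewrite addr0. Qed.

Lemma row_shift_comp g h i j k t u :
  row_shift g i j t -> row_shift h j k u -> row_shift (h \o g) i k (t + u).
Proof.
move=> [z1 Hg] [z2 Hh]; exists (z1 + z2 + absz t)%N => m Hm.
have [gi gm] := Hg m ltac:(lia).
have [hk hm] := Hh (g (i, m)).2 ltac:(lia).
rewrite /=; have -> : g (i, m) = (j, (g (i, m)).2) by rewrite -gi -surjective_pairing.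
by rewrite hk hm gm addrA.
Qed.

Lemma row_shift_unique g i j j' t u :
  row_shift g i j t -> row_shift g i j' u -> t = u.
Proof.
move=> [z1 H1] [z2 H2]; have [_ E1] := H1 (z1 + z2)%N (leq_addr _ _).
have [_ E2] := H2 (z1 + z2)%N (leq_addl _ _).
by apply/(addrI (Posz (z1 + z2))); rewrite -E1 -E2.
Qed.

End RowShift.

Lemma conj_trans_step (n : nat) (a b x wa wb : Xn n -> Xn n) (sigma : 'S_n)
  (ta tb tx : 'I_n -> int) (i : 'I_n) :
  (forall p, a p = sact sigma (wa p)) ->
  (forall p, b p = sact sigma (wb p)) ->
  (forall p, x (a p) = b (x p)) ->
  is_trans wa i (ta i) -> is_trans wb i (tb i) ->
  is_trans x i (tx i) -> is_trans x (sigma i) (tx (sigma i)) ->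
  tx (sigma i) = (tx i + (tb i - ta i))%R.
Proof.
move=> Ha Hb Hconj Hta Htb Htx Htxs.
have Hax : row_shift (x \o a) i (sigma i) (ta i + 0 + tx (sigma i)).
  apply: (row_shift_comp _ Htxs); apply: (row_shift_ext (f := sact sigma \o wa)).
    by move=> p; rewrite Ha.
  exact: row_shift_comp Hta (row_shift_sact _ _).
have Hxb : row_shift (b \o x) i (sigma i) (tx i + (tb i + 0)).
  apply: row_shift_comp Htx _; apply: (row_shift_ext (f := sact sigma \o wb)).
    by move=> p; rewrite Hb.
  exact: row_shift_comp Htb (row_shift_sact _ _).
have := row_shift_unique Hax (row_shift_ext (fun p => esym (Hconj p)) Hxb).
by rewrite !addr0; lia.
Qed.

Lemma perm_orbit_telescope (T : finType) (V : zmodType) (sigma : {perm T})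
    (f g : T -> V) (i : T) :
  (forall j, f (sigma j) = f j + g j)%R ->
  forall s, f ((sigma ^+ s)%g i) = (f i + \sum_(0 <= d < s) g ((sigma ^+ d)%g i))%R.
Proof.
move=> fS; elim=> [|s IH]; first by rewrite expg0 perm1 big_geq // addr0.
by rewrite expgSr permM fS IH big_nat_recr //= addrA.
Qed.

Theorem lemma3p10 (n : nat) (hn : (2 <= n)%N)
  (a b x wa wb : Xn n -> Xn n) (sigma : 'S_n)
  (Hwa : in_H wa) (Hwb : in_H wb)
  (Ha : forall p, a p = sact sigma (wa p))   (* a = omega_a sigma_a *)
  (Hb : forall p, b p = sact sigma (wb p))   (* b = omega_b sigma_b, sigma_b = sigma_a *)
  (Hx : in_H x)
  (Hconj : forall p, x (a p) = b (x p))      (* x^-1 a x = b, i.e. a x = x b *)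
  (ta tb tx : 'I_n -> int)
  (Hta : forall i, is_trans wa i (ta i))
  (Htb : forall i, is_trans wb i (tb i))
  (Htx : forall i, is_trans x i (tx i))
  (k i1 : 'I_n) (q : nat)
  (Hq : q = #|porbit sigma k|)
  (Hi1 : i1 \in porbit sigma k) :
  forall s : nat, (1 <= s <= q)%N ->
    tx ((sigma ^+ s.-1)%g i1) =
      (tx i1 + \sum_(1 <= d < s)
                 (tb ((sigma ^+ d.-1)%g i1) - ta ((sigma ^+ d.-1)%g i1)))%R.
Proof.
have step j : tx (sigma j) = (tx j + (tb j - ta j))%R.
  exact: conj_trans_step Ha Hb Hconj (Hta j) (Htb j) (Htx j) (Htx (sigma j)).
move=> [//|s] _.
by rewrite big_add1 /= (perm_orbit_telescope i1 step).
Qed.
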